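(* Let $\lambda,\mu\in P^+$ be such that $\langle\alpha_i^\vee,\mu\rangle=0$ whenever $\langle\alpha_i^\vee,\lambda\rangle=0$. If $x\otimes y\in\mathcal{F}(\{b_\lambda\otimes b_\mu\})\subseteq\mathcal{B}(\lambda)\otimes\mathcal{B}(\mu)$ and $x\in\mathcal{B}_w(\lambda)$ for some $w\in W$, then $y\in\mathcal{B}_w(\mu)$.
   Context: $\mathfrak g$ is a complex semisimple Lie algebra with Dynkin index set $I$, simple coroots $\alpha_i^\vee$, dominant weights $P^+$, Weyl group $W$ generated by simple reflections $s_i$. For $\lambda\in P^+$, $\mathcal{B}(\lambda)$ is Kashiwara's crystal of the irreducible module of highest weight $\lambda$ with operators $e_i,f_i$, $\varepsilon_i(b)=\max\{k:e_i^k(b)\ne0\}$, $\varphi_i(b)=\max\{k:f_i^k(b)\ne0\}$, and highest weight element $b_\lambda$. For $w$ with any reduced expression $s_{i_1}\cdots s_{i_\ell}$, $\mathcal{B}_w(\lambda)=\{f_{i_1}^{m_1}\cdots f_{i_\ell}^{m_\ell}(b_\lambda):m_j\ge0\}\setminus\{0\}$. Tensor product rule: $e_i(b_1\otimes b_2)=e_i(b_1)\otimes b_2$ if $\varepsilon_i(b_2)\le\varphi_i(b_1)$, else $b_1\otimes e_i(b_2)$; $f_i(b_1\otimes b_2)=f_i(b_1)\otimes b_2$ if $\varepsilon_i(b_2)<\varphi_i(b_1)$, else $b_1\otimes f_i(b_2)$. $\mathcal{F}(\{b\})$ denotes the set of all nonzero elements obtained from $b$ by applying finite sequences of the operators $f_i$,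 $i\in I$ (including $b$ itself). *)

From mathcomp Require Import all_boot all_order all_algebra.
Set Implicit Arguments. Unset Strict Implicit. Unset Printing Implicit Defensive.
Import Order.TTheory GRing.Theory Num.Theory.
Local Open Scope ring_scope.

(** The semisimple Lie algebra g is encoded by its Cartan
    matrix A : 'M[int]_n (index set I = 'I_n), with A i j = <alpha_i^v, alpha_j>.
    Weights are written in the basis of fundamental weights, so a weight is a
    function 'I_n -> int with  <alpha_i^v, v> = v i;  dominant weights P^+ are
    the functions 'I_n -> nat. *)

(** Cartan matrix of finite type (= Cartan matrix of a complex semisimple Lie
    algebra): generalized Cartan matrix which is symmetrizable with positive
    definite symmetrization. *)
Definition cartan_finite (n : nat) (A : 'M[int]_n) : Prop :=
  [/\ (forall i, A i i = 2),
      (forall i j, i != j -> A i j <= 0),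
      (forall i j, A i j = 0 <-> A j i = 0) &
      exists d : 'I_n -> rat,
        [/\ (forall i, 0 < d i),
            (forall i j, d i * (A i j)%:~R = d j * (A j i)%:~R) &
            (forall v : 'I_n -> rat, (exists i, v i != 0) ->
               0 < \sum_i \sum_j v i * d i * (A i j)%:~R * v j)]].

Definition weight (n : nat) := 'I_n -> int.

Definition alpha (n : nat) (A : 'M[int]_n) (j : 'I_n) : weight n := fun i => A i j.

(** Weyl group: simple reflection s_i v = v - <alpha_i^v, v> alpha_i,
    words act by s_{i1} ( ... (s_{il} v)). *)
Definition sref (n : nat) (A : 'M[int]_n) (i : 'I_n) (v : weight n) : weight n :=
  fun j => v j - v i * A j i.

Definition wact (n : nat) (A : 'M[int]_n) (w : seq 'I_n) (v : weight n) : weight n :=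
  foldr (fun i u => sref A i u) v w.

Definition reduced (n : nat) (A : 'M[int]_n) (w : seq 'I_n) : Prop :=
  forall w' : seq 'I_n, (forall v j, wact A w' v j = wact A w v j) ->
    (size w <= size w')%N.

(** Crystal data: carrier, weight, Kashiwara operators (None = 0),
    epsilon and phi. *)
Record crystal_data (n : nat) := CrystalData {
  cB : Type;
  cwt : cB -> weight n;
  ce : 'I_n -> cB -> option cB;
  cf : 'I_n -> cB -> option cB;
  ceps : 'I_n -> cB -> nat;
  cphi : 'I_n -> cB -> nat }.
Arguments cB {n} c.
Arguments cwt {n} c _ _.
Arguments ce {n} c _ _.
Arguments cf {n} c _ _.
Arguments ceps {n} c _ _.
Arguments cphi {n} c _ _.

Definition oiter (T : Type) (g : T -> option T) (k : nat) (b : T) : option T :=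
  iter k (fun o => obind g o) (Some b).

(** Seminormal crystal: Kashiwara's crystal axioms with
    eps_i b = max{k | e_i^k b <> 0}, phi_i b = max{k | f_i^k b <> 0}. *)
Definition seminormal (n : nat) (A : 'M[int]_n) (C : crystal_data n) : Prop :=
  [/\ (forall i b b', ce C i b = Some b' <-> cf C i b' = Some b),
      (forall i b b', ce C i b = Some b' ->
          forall j, cwt C b' j = cwt C b j + alpha A i j),
      (forall i b, oiter (ce C i) (ceps C i b) b <> None /\
                   oiter (ce C i) (ceps C i b).+1 b = None),
      (forall i b, oiter (cf C i) (cphi C i b) b <> None /\
                   oiter (cf C i) (cphi C i b).+1 b = None) &
      (forall i b, (cphi C i b)%:Z - (ceps C i b)%:Z = cwt C b i)].

Definition tensor_e (n : nat) (C D : crystal_data n) (i : 'I_n)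
    (p : cB C * cB D) : option (cB C * cB D) :=
  if (ceps D i p.2 <= cphi C i p.1)%N
  then omap (fun c => (c, p.2)) (ce C i p.1)
  else omap (fun d => (p.1, d)) (ce D i p.2).

Definition tensor_f (n : nat) (C D : crystal_data n) (i : 'I_n)
    (p : cB C * cB D) : option (cB C * cB D) :=
  if (ceps D i p.2 < cphi C i p.1)%N
  then omap (fun c => (c, p.2)) (cf C i p.1)
  else omap (fun d => (p.1, d)) (cf D i p.2).

Definition tensor_wt (n : nat) (C D : crystal_data n) (p : cB C * cB D) : weight n :=
  fun j => cwt C p.1 j + cwt D p.2 j.

Inductive in_F (n : nat) (T : Type) (f : 'I_n -> T -> option T) (b0 : T) : T -> Prop :=
  | inF0 : in_F f b0 b0
  | inFS i b b' : in_F f b0 b -> f i b = Some b' -> in_F f b0 b'.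

(** B_w(lambda) for the word w = [:: i1; ...; il]:
    { f_{i1}^{m1} ... f_{il}^{ml} b0 } \ {0} *)
Definition in_Bw (n : nat) (T : Type) (f : 'I_n -> T -> option T) (b0 : T)
    (w : seq 'I_n) (b : T) : Prop :=
  exists ms : seq nat, size ms = size w /\
    foldr (fun im o => obind (oiter (f im.1) im.2) o) (Some b0) (zip w ms) = Some b.

Arguments tensor_e {n} C D i p.
Arguments tensor_f {n} C D i p.
Arguments tensor_wt {n} C D p _.
Arguments in_F {n T} f b0 _.
Arguments in_Bw {n T} f b0 w b.
Arguments oiter {T} g k b.

Definition nat_wt (n : nat) (l : 'I_n -> nat) : weight n := fun i => (l i)%:Z.

(** Kashiwara's family {B(lambda)}_{lambda in P^+}, characterised (Joseph's
    uniqueness theorem) as a family of seminormal highest weight crystals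
    B(lambda) with highest weight element b_lambda of weight lambda, such that
    the subcrystal of B(lambda) (x) B(mu) generated by b_lambda (x) b_mu is
    isomorphic to B(lambda+mu). *)
Definition kashiwara_family (n : nat) (A : 'M[int]_n)
    (B : ('I_n -> nat) -> crystal_data n) (hw : forall l, cB (B l)) : Prop :=
  [/\ (forall l, seminormal A (B l)),
      (forall l j, cwt (B l) (hw l) j = nat_wt l j),
      (forall l i, ce (B l) i (hw l) = None),
      (forall l b, in_F (cf (B l)) (hw l) b) &
      (forall l m, exists g : cB (B l) * cB (B m) -> cB (B (fun i => l i + m i)%N),
        [/\ g (hw l, hw m) = hw _,
            (forall p q, in_F (tensor_f (B l) (B m)) (hw l, hw m) p ->
               in_F (tensor_f (B l) (B m)) (hw l, hw m) q -> g p = g q -> p = q),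
            (forall b, exists2 p, in_F (tensor_f (B l) (B m)) (hw l, hw m) p & g p = b) &
            (forall p, in_F (tensor_f (B l) (B m)) (hw l, hw m) p ->
               [/\ (forall j, cwt _ (g p) j = tensor_wt (B l) (B m) p j),
                   (forall i, omap g (tensor_f (B l) (B m) i p) = cf _ i (g p)) &
                   (forall i, omap g (tensor_e (B l) (B m) i p) = ce _ i (g p))])])].
Arguments kashiwara_family {n} A B hw.
Arguments seminormal {n} A C.
Arguments reduced {n} A w.

From mathcomp Require Import all_boot all_order all_algebra.
Set Implicit Arguments. Unset Strict Implicit. Unset Printing Implicit Defensive.
Import GRing.Theory.

(* Let C be the set of elements of the component of B(l) (x) B(m) generated
   by b_l (x) b_m.  Since this component is isomorphic to the crystal B(l+m),
   in which every element lies in F({b_{l+m}}), C is also closed under the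
   operators e_i.  Now let (x, y) be in C with x = f_i^k x'.  Applying e_i to
   (x, y) repeatedly strips the k operators f_i off the first factor, possibly
   interleaved with some e_i acting on the second factor; this produces
   (x', y') in C with y = f_i^b y'.  Peeling the word w = i_1 ... i_r off x in
   this way reduces to an element (b_l, y'') of C, and the support condition
   forces y'' = b_m. *)

Section OptionIteration.
Variables (T : Type) (g : T -> option T).

Lemma oiterS k b : oiter g k.+1 b = obind g (oiter g k b).
Proof. by []. Qed.

Lemma oiterD k1 k2 b : oiter g (k1 + k2) b = obind (oiter g k1) (oiter g k2 b).
Proof.
elim: k1 => [|k1 IHk]; first by case: (oiter g k2 b).
by rewrite addSn oiterS IHk; case: (oiter g k2 b).
Qed.

Lemma oiterSr k b : oiter g k.+1 b = obind (oiter g k) (g b).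
Proof. by rewrite -addn1 oiterD. Qed.

Lemma oiter_None_leq k k' b :
  oiter g k b = None -> (k <= k')%N -> oiter g k' b = None.
Proof. by move=> gk /subnK <-; rewrite oiterD gk. Qed.

Lemma oiter_max_succ (N : T -> nat) :
    (forall b, oiter g (N b) b <> None /\ oiter g (N b).+1 b = None) ->
  forall b b', g b = Some b' -> N b = (N b').+1.
Proof.
move=> maxN b b' gb; have [Nb_def Nb_max] := maxN b; have [Nb'_def Nb'_max] := maxN b'.
case Nb: (N b) Nb_def Nb_max => [|k]; first by rewrite oiterSr gb.
rewrite oiterSr gb => gk; rewrite oiterSr gb => gk1; congr _.+1.
case: (ltngtP (N b') k) => // [lt|gt].
- by case: (gk (oiter_None_leq Nb'_max lt)).
- by case: (Nb'_def (oiter_None_leq gk1 gt)).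
Qed.

End OptionIteration.

Section Seminormal.
Variables (n : nat) (A : 'M[int]_n) (C : crystal_data n).
Hypothesis C_sn : seminormal A C.

Lemma ce_cf i b b' : ce C i b = Some b' <-> cf C i b' = Some b.
Proof. by case: C_sn. Qed.

Lemma ceps_ce i b b' : ce C i b = Some b' -> ceps C i b = (ceps C i b').+1.
Proof. by case: C_sn => _ _ maxe _ _; exact: (oiter_max_succ (maxe i)). Qed.

Lemma cphi_cf i b b' : cf C i b = Some b' -> cphi C i b = (cphi C i b').+1.
Proof. by case: C_sn => _ _ _ maxf _; exact: (oiter_max_succ (maxf i)). Qed.

Lemma ceps_gt0 i b : (0 < ceps C i b)%N -> exists b', ce C i b = Some b'.
Proof.
case: C_sn => _ _ maxe _ _; have [+ _] := maxe i b.
case: (ceps C i b) => [|k] // + _; rewrite oiterSr.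
by case: (ce C i b) => [b'|] // _; exists b'.
Qed.

Lemma ceps_eq0 i b : ce C i b = None -> ceps C i b = 0%N.
Proof.
case: C_sn => _ _ maxe _ _ eb; have [+ _] := maxe i b.
by case: (ceps C i b) => [|k] //; rewrite oiterSr eb.
Qed.

Lemma cf_None i b : cphi C i b = 0%N -> cf C i b = None.
Proof. by case: C_sn => _ _ _ maxf _ phi0; have [_] := maxf i b; rewrite phi0. Qed.

End Seminormal.

Lemma tensor_f_e n (A : 'M[int]_n) (C D : crystal_data n) :
    seminormal A C -> seminormal A D ->
  forall i p q, tensor_f C D i p = Some q -> tensor_e C D i q = Some p.
Proof.
move=> C_sn D_sn i [x y] q; rewrite /tensor_f /tensor_e /=.
case: ltnP => [lt_eps_phi|le_phi_eps].
- case fx: (cf C i x) => [x'|] //= [<-] /=.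
  rewrite -ltnS -(cphi_cf C_sn fx) lt_eps_phi.
  by have -> : ce C i x' = Some x by apply/(ce_cf C_sn).
- case fy: (cf D i y) => [y'|] //= [<-] /=.
  have ey' : ce D i y' = Some y by apply/(ce_cf D_sn).
  by rewrite (ceps_ce D_sn ey') ltnNge le_phi_eps ey'.
Qed.

Section KashiwaraFamily.
Variables (n : nat) (A : 'M[int]_n)
  (B : ('I_n -> nat) -> crystal_data n) (hw : forall l, cB (B l)).
Hypothesis B_kf : kashiwara_family A B hw.

Let B_sn l : seminormal A (B l).
Proof. by case: B_kf. Qed.

Lemma ceps_hw l i : ceps (B l) i (hw l) = 0%N.
Proof. by case: B_kf => _ _ hw_e _ _; exact: (ceps_eq0 (B_sn l) (hw_e l i)). Qed.

Lemma cphi_hw l i : cphi (B l) i (hw l) = l i.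
Proof.
case: B_kf => _ hw_wt _ _ _; case: (B_sn l) => _ _ _ _ phi_eps.
by have := phi_eps i (hw l); rewrite ceps_hw subr0 hw_wt => -[].
Qed.

Variables l m : 'I_n -> nat.

Let component p := in_F (tensor_f (B l) (B m)) (hw l, hw m) p.

Lemma component_closed_e i p q :
  component p -> tensor_e (B l) (B m) i p = Some q -> component q.
Proof.
case: B_kf => _ _ _ _ iso; have [g [_ g_inj g_onto g_morph]] := iso l m.
move=> Cp ep; have [_ _ g_e] := g_morph p Cp.
have fgq : cf _ i (g q) = Some (g p) by apply/(ce_cf (B_sn _)); rewrite -g_e ep.
have [q' Cq' gq'] := g_onto (g q); have [_ g_f _] := g_morph q' Cq'.
move: (g_f i); rewrite gq' fgq.
case fq': (tensor_f _ _ i q') => [p'|] //= [gp'].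
have Cp' : component p' by apply: inFS Cq' fq'.
have {gp'} p'p := g_inj _ _ Cp' Cp gp'; subst p'.
by move: (tensor_f_e (B_sn l) (B_sn m) fq'); rewrite ep => -[->].
Qed.

Lemma component_e_first i x x' y :
    component (x, y) -> ce (B l) i x = Some x' ->
  exists y' b, component (x', y') /\ oiter (cf (B m) i) b y' = Some y.
Proof.
move=> Cxy ex; have [N] := ubnP (ceps (B m) i y).
elim: N y Cxy => [|N IHN] y Cxy lt_eps_N //.
case: (leqP (ceps (B m) i y) (cphi (B l) i x)) => [le_eps_phi|lt_phi_eps].
  exists y, 0%N; split=> //.
  by apply: (component_closed_e (i := i) Cxy); rewrite /tensor_e /= le_eps_phi ex.
have [y1 ey] := ceps_gt0 (B_sn m) (leq_ltn_trans (leq0n _) lt_phi_eps).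
have Cxy1 : component (x, y1).
  by apply: (component_closed_e (i := i) Cxy); rewrite /tensor_e /= leqNgt lt_phi_eps ey.
have lt_eps1_N : (ceps (B m) i y1 < N)%N by rewrite -ltnS -(ceps_ce (B_sn m) ey).
have [y' [b [Cx'y' fby']]] := IHN y1 Cxy1 lt_eps1_N.
exists y', b.+1; split=> //.
by rewrite oiterS fby' /=; apply/(ce_cf (B_sn m)).
Qed.

Lemma component_oiter_first i k x x' y :
    component (x, y) -> oiter (cf (B l) i) k x' = Some x ->
  exists y' b, component (x', y') /\ oiter (cf (B m) i) b y' = Some y.
Proof.
elim: k x y => [|k IHk] x y Cxy; first by move=> [->]; exists y, 0%N.
rewrite oiterS; case fkx': (oiter _ k x') => [x1|] //= fx1.
have ex : ce (B l) i x = Some x1 by apply/(ce_cf (B_sn l)).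
have [y1 [b1 [Cx1y1 fb1y1]]] := component_e_first Cxy ex.
have [y' [b2 [Cx'y' fb2y']]] := IHk x1 y1 Cx1y1 fkx'.
by exists y', (b1 + b2)%N; rewrite oiterD fb2y'.
Qed.

Hypothesis lm_supp : forall i, l i = 0%N -> m i = 0%N.

Lemma component_hw_first p : component p -> p.1 = hw l -> p.2 = hw m.
Proof.
elim=> [//|i [x y] p' _ IH]; rewrite /tensor_f /=.
case: ltnP => [_|le_phi_eps].
- case fx: (cf _ i x) => [x'|] //= [<-] /= x'hw.
  by have := (ce_cf (B_sn l) _ _ _).2 fx; rewrite x'hw; case: B_kf => _ _ -> _ _.
- case fy: (cf _ i y) => [y'|] //= [<-] /= xhw.
  have yhw : y = hw m := IH xhw.
  rewrite xhw yhw ceps_hw cphi_hw leqn0 in le_phi_eps.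
  have phi0 : cphi (B m) i y = 0%N by rewrite yhw cphi_hw lm_supp //; apply/eqP.
  by rewrite (cf_None (B_sn m) phi0) in fy.
Qed.

Lemma component_Bw w x y : component (x, y) ->
  in_Bw (cf (B l)) (hw l) w x -> in_Bw (cf (B m)) (hw m) w y.
Proof.
elim: w x y => [|i w IHw] x y Cxy [[|k ks] []] //= => [_ [xhw]|[size_ks]].
  exists [::]; split=> //=.
  by have /= -> := component_hw_first Cxy (esym xhw).
case fks: (foldr _ _ (zip w ks)) => [x'|] //= fkx'.
have [y' [b [Cx'y' fby']]] := component_oiter_first Cxy fkx'.
have [bs [size_bs fbs]] := IHw x' y' Cx'y' (ex_intro _ ks (conj size_ks fks)).
by exists (b :: bs); rewrite /= size_bs fbs.
Qed.

End KashiwaraFamily.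

Theorem lemma9p1 (n : nat) (A : 'M[int]_n)
    (B : ('I_n -> nat) -> crystal_data n) (hw : forall l, cB (B l)) :
  cartan_finite A -> kashiwara_family A B hw ->
  forall l m : 'I_n -> nat,
    (forall i, l i = 0%N -> m i = 0%N) ->
  forall (x : cB (B l)) (y : cB (B m)),
    in_F (tensor_f (B l) (B m)) (hw l, hw m) (x, y) ->
  forall w : seq 'I_n, reduced A w ->
    in_Bw (cf (B l)) (hw l) w x -> in_Bw (cf (B m)) (hw m) w y.
Proof.
move=> _ B_kf l m lm_supp x y Cxy w _.
exact: (component_Bw B_kf lm_supp Cxy).
Qed.
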